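(* Fix $\theta$ with $\phi(\theta)<\beta$ and $Q\in\{0,1\}$, and suppose $\tau_1^d(\theta)\neq\tau_2^d(\theta)$. For every $\tau$ strictly between $\tau_1^d(\theta)$ and $\tau_2^d(\theta)$, we have $s_1(\theta,\tau)>s_2(\theta,\tau)$ if and only if $u(s_2(\theta,\tau))<u(s_1(\theta,\tau))$ (i.e., the firm prefers $s_2$ to $s_1$).
   Context: Setup. Let $Q\in\{0,1\}$ be a random variable with $\mathbb P(Q=1)=\pi\in(0,1)$, and let $(\Theta,\Gamma)$ be a real-valued random vector whose conditional joint density given $Q=1$ is $h_q$ and given $Q=0$ is $h_u$, both strictly positive on $\mathbb R^2$. Monotone likelihood ratio assumption: $l(\theta,\gamma)=h_q(\theta,\gamma)/h_u(\theta,\gamma)$ is continuous and strictly increasing in each of $\theta$ and $\gamma$, and for each $\theta$ the map $\gamma\mapsto l(\theta,\gamma)$ has infimum $0$ and supremum $+\infty$. Fix payoffs $x_q>0$, $x_u>0$. For $\tau\in(-x_u,x_q)$ let $A(\tau)=\mathbb 1\{l(\Theta,\Gamma)>\frac{(1-\pi)(x_u+\tau)}{\pi(x_q-\tau)}\}$, $s_1(\theta,\tau)=\mathbb E[Q\mid\Theta=\theta,A(\tau)=1]$, $s_2(\theta,\tau)=\mathbb E[A(\tau)\mid\Theta=\theta]$, $\phi(\theta)=\mathbb P(Q=1\mid\Theta=\theta)$. Regret. Fix a cutoff $c\in(-x_u,x_q)$ and let $\beta=(x_u+c)/(x_q+x_u)\in(0,1)$. For a score value $s\in[0,1]$ and a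 qualification value $Q\in\{0,1\}$ define $\mathcal N(s)=sx_q-(1-s)x_u$, $A'(s)=\mathbb 1\{\mathcal N(s)>c\}$ (i.e. $s>\beta$), $\mathcal P(s)=A'(s)(Qx_q-(1-Q)x_u)$, and the individual regret $u(s)=\mathcal N(s)-\mathcal P(s)$. The critical prejudice $\tau_k^d(\theta)$, $k=1,2$, is the unique $\tau\in(-x_u,x_q)$ with $s_k(\theta,\tau)=\beta$ (it exists for $k=1$ when $\phi(\theta)<\beta$, and always for $k=2$). The firm prefers $s$ to $s'$ at $(\theta,\tau)$ if $u(s(\theta,\tau))<u(s'(\theta,\tau))$. *)

From HB Require Import structures.
From mathcomp Require Import all_boot all_order all_algebra.
From mathcomp Require Import all_classical all_reals all_analysis.
Set Implicit Arguments. Unset Strict Implicit. Unset Printing Implicit Defensive.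
Import Order.TTheory GRing.Theory Num.Theory.
Import numFieldNormedType.Exports.
Local Open Scope classical_set_scope.
Local Open Scope ring_scope.

Section Defs.
Variable R : realType.

Definition gint (f : R -> R) : R := Rintegral (@lebesgue_measure R) setT f.

Definition lr (hq hu : R -> R -> R) (th g : R) : R := hq th g / hu th g.

Definition thr (pi xq xu tau : R) : R :=
  ((1 - pi) * (xu + tau)) / (pi * (xq - tau)).

(* A(tau) on the event (Theta,Gamma) = (th,g) *)
Definition Aind (hq hu : R -> R -> R) (pi xq xu tau th g : R) : R :=
  if lr hq hu th g > thr pi xq xu tau then 1 else 0.

(* phi(th) = P(Q=1 | Theta = th) *)
Definition phi (hq hu : R -> R -> R) (pi th : R) : R :=
  (pi * gint (fun g => hq th g)) /
  gint (fun g => pi * hq th g + (1 - pi) * hu th g).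

(* s_1(th,tau) = E[Q | Theta = th, A(tau) = 1] *)
Definition s1 (hq hu : R -> R -> R) (pi xq xu th tau : R) : R :=
  gint (fun g => pi * hq th g * Aind hq hu pi xq xu tau th g) /
  gint (fun g => (pi * hq th g + (1 - pi) * hu th g) * Aind hq hu pi xq xu tau th g).

(* s_2(th,tau) = E[A(tau) | Theta = th] *)
Definition s2 (hq hu : R -> R -> R) (pi xq xu th tau : R) : R :=
  gint (fun g => (pi * hq th g + (1 - pi) * hu th g) * Aind hq hu pi xq xu tau th g) /
  gint (fun g => pi * hq th g + (1 - pi) * hu th g).

Definition beta (xq xu c : R) : R := (xu + c) / (xq + xu).

Definition Nv (xq xu s : R) : R := s * xq - (1 - s) * xu.

Definition Aprime (xq xu c s : R) : R := if Nv xq xu s > c then 1 else 0.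

(* P(s) = A'(s) (Q x_q - (1-Q) x_u), Q in {0,1} encoded as a bool *)
Definition Pv (xq xu c : R) (Q : bool) (s : R) : R :=
  Aprime xq xu c s * ((Q%:R) * xq - (1 - Q%:R) * xu).

Definition regret (xq xu c : R) (Q : bool) (s : R) : R :=
  Nv xq xu s - Pv xq xu c Q s.

End Defs.

From HB Require Import structures.
From mathcomp Require Import all_boot all_order all_algebra.
From mathcomp Require Import all_classical all_reals all_analysis.
From mathcomp Require Import measurable_realfun lra ring.
Set Implicit Arguments. Unset Strict Implicit. Unset Printing Implicit Defensive.
Import Order.TTheory GRing.Theory Num.Theory.
Import numFieldNormedType.Exports.
Local Open Scope classical_set_scope.
Local Open Scope ring_scope.

(* Fix the signal th and write a = hq th, b = hu th and l = a / b for the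
   sections of the densities and of the likelihood ratio.  The event
   {A(tau) = 1} is the upper level set {thr tau < l}, so with A(t), B(t) the
   integrals of a, b over {t < l}:
     s1(tau) = pi A / (pi A + (1 - pi) B),   s2(tau) = (pi A + (1 - pi) B) / Z
   at t = thr tau, where Z is the total mixture mass and thr is strictly
   increasing in tau.  Raising the level from t to t' removes the band
   {t < l <= t'}, of positive measure, on which a <= t' b, while a > t' b on
   what remains; hence A and B decrease while A/B increases, i.e. s1 is
   strictly increasing and s2 strictly decreasing in tau.  Strictly between
   tau1 (where s1 = beta) and tau2 (where s2 = beta), both scores therefore
   lie on the same side of beta, so the firm takes the same decision with
   either score and the regrets differ by N, which is increasing in s. *)

Lemma Rintegral_gt0 d (T : measurableType d) (R : realType)
  (mu : {measure set T -> \bar R}) (U : set T) (f : T -> R) :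
  measurable U -> (0 < mu U)%E -> mu.-integrable U (EFin \o f) ->
  (forall x, U x -> 0 < f x) -> 0 < Rintegral mu U f.
Proof.
move=> mU muU0 fint fpos.
rewrite lt0r Rintegral_ge0 ?andbT; last by move=> x /fpos /ltW.
apply/negP => /eqP int0.
have abs0 : (\int[mu]_(x in U) `|(f x)%:E| = 0)%E.
  rewrite (eq_integral (fun x => (f x)%:E)); last first.
    by move=> x /set_mem Ux; rewrite gee0_abs// lee_fin ltW// fpos.
  by rewrite -(fineK (integrable_fin_num mU fint)); move: int0; rewrite /Rintegral => ->.
have [N [mN N0 UN]] := (ae_eq_integral_abs mu mU (measurable_int mu fint)).1 abs0.
have UsubN : U `<=` N.
  move=> x Ux; apply: UN => /= fx0.
  by have := fpos x Ux; rewrite (EFin_inj (fx0 Ux)) ltxx.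
have := lt_le_trans muU0 (le_measure mu (mem_set mU) (mem_set mN) UsubN).
by move: N0 => /= ->; rewrite ltxx.
Qed.

Lemma integrable_scale d (T : measurableType d) (R : realType)
  (mu : {measure set T -> \bar R}) (D : set T) (f : T -> R) (k : R) :
  measurable D -> mu.-integrable D (EFin \o f) ->
  mu.-integrable D (EFin \o (fun x => k * f x)).
Proof.
move=> mD fint; apply: (eq_integrable mD _ _ _ (integrableZl mD k fint)).
by move=> x _ /=; rewrite EFinM.
Qed.

Lemma integrable_lincomb d (T : measurableType d) (R : realType)
  (mu : {measure set T -> \bar R}) (D : set T) (f g : T -> R) (p q : R) :
  measurable D ->
  mu.-integrable D (EFin \o f) -> mu.-integrable D (EFin \o g) ->
  mu.-integrable D (EFin \o (fun x => p * f x + q * g x)).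
Proof.
move=> mD fint gint.
have := integrableD mD (integrable_scale p mD fint) (integrable_scale q mD gint).
by apply: eq_integrable => // x _ /=; rewrite EFinD.
Qed.

Lemma integrable_sub (R : realType) (D : set R) (f : R -> R) :
  measurable D -> (@lebesgue_measure R).-integrable setT (EFin \o f) ->
  (@lebesgue_measure R).-integrable D (EFin \o f).
Proof. by move=> mD fint; apply: (integrableS measurableT _ _ fint). Qed.

Lemma Rintegral_lincomb d (T : measurableType d) (R : realType)
  (mu : {measure set T -> \bar R}) (D : set T) (f g : T -> R) (p q : R) :
  measurable D ->
  mu.-integrable D (EFin \o f) -> mu.-integrable D (EFin \o g) ->
  Rintegral mu D (fun x => p * f x + q * g x) =
  p * Rintegral mu D f + q * Rintegral mu D g.
Proof.
by move=> mD fint gint; rewrite RintegralD ?integrable_scale // !RintegralZl.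
Qed.

Lemma Rintegral_indicator (R : realType) (f : R -> R) (S : set R) (P : R -> bool) :
  measurable S -> (@lebesgue_measure R).-integrable setT (EFin \o f) ->
  (forall g, P g <-> S g) ->
  Rintegral (@lebesgue_measure R) setT (fun g => f g * (if P g then 1 else 0)) =
  Rintegral (@lebesgue_measure R) S f.
Proof.
move=> mS fint PS.
rewrite [RHS]Rintegral_mkcond; apply: eq_Rintegral => x _.
rewrite patchE; case: (boolP (x \in S)) => Sx; case: ifPn => Px.
- by rewrite mulr1.
- by case/negP: Px; apply/PS; rewrite inE in Sx.
- by case/negP: Sx; rewrite inE; apply/PS.
- by rewrite mulr0.
Qed.

Lemma itv_measure_gt0 (R : realType) (x y : R) :
  x < y -> (0 < (@lebesgue_measure R) `[x, y])%E.
Proof.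
by move=> xy; rewrite lebesgue_measure_itv /= lte_fin xy -EFinD lte_fin subr_gt0.
Qed.

Lemma share_lt (R : realFieldType) (pi t A A' B B' : R) : 0 < pi < 1 ->
  0 < A - A' -> 0 < B - B' -> 0 < A' -> 0 < B' ->
  A - A' <= t * (B - B') -> t * B' < A' ->
  pi * A / (pi * A + (1 - pi) * B) < pi * A' / (pi * A' + (1 - pi) * B').
Proof.
move=> /andP[pi0 pi1] dA dB A'0 B'0 removed_le kept_gt.
have den0 : 0 < pi * A + (1 - pi) * B by nra.
have den'0 : 0 < pi * A' + (1 - pi) * B' by nra.
have cross : (A - A') * B' < A' * (B - B').
  have : (A - A') * B' <= t * (B - B') * B' by rewrite ler_pM2r.
  have : t * B' * (B - B') < A' * (B - B') by rewrite ltr_pM2r.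
  lra.
rewrite ltr_pdivrMr // mulrAC ltr_pdivlMr // -subr_gt0.
have -> : pi * A' * (pi * A + (1 - pi) * B) - pi * A * (pi * A' + (1 - pi) * B')
  = pi * (1 - pi) * (A' * (B - B') - (A - A') * B') by ring.
by apply: mulr_gt0; [nra | rewrite subr_gt0].
Qed.

Section UpperLevelSets.
Variable R : realType.
Local Notation mu := (@lebesgue_measure R).
Variables a b l : R -> R.
Hypothesis a_gt0 : forall g, 0 < a g.
Hypothesis b_gt0 : forall g, 0 < b g.
Hypothesis a_int : mu.-integrable setT (EFin \o a).
Hypothesis b_int : mu.-integrable setT (EFin \o b).
Hypothesis l_ratio : forall g, l g = a g / b g.
Hypothesis l_cont : continuous l.
Hypothesis l_incr : {homo l : x y / x < y}.
Hypothesis l_inf : forall e, 0 < e -> exists g, l g < e.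
Hypothesis l_sup : forall M, exists g, M < l g.

Let l_le : {mono l : x y / x <= y} := le_mono l_incr.

(* By the intermediate value theorem, l takes every positive value. *)
Lemma ratio_onto v : 0 < v -> exists g, l g = v.
Proof.
move=> v0; have [x lx] := l_inf v0; have [y ly] := l_sup v.
have lxy : l x <= l y by rewrite ltW // (lt_trans lx ly).
have vbetween : Num.min (l x) (l y) <= v <= Num.max (l x) (l y).
  by rewrite (min_l lxy) (max_r lxy) !ltW.
have xy : x <= y by rewrite -l_le.
have [g _ <-] := IVT xy (continuous_subspaceT l_cont) vbetween.
by exists g.
Qed.

Definition upper (t : R) : set R := [set g | t < l g].
Definition band (t t' : R) : set R := upper t `\` upper t'.

Lemma measurable_upper t : measurable (upper t).
Proof.
apply: open_measurable; have -> : upper t = l @^-1` [set x | t < x] by [].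
by apply: open_comp; [move=> x _; exact: l_cont | exact: open_gt].
Qed.

Lemma measurable_band t t' : measurable (band t t').
Proof. exact: measurableD (measurable_upper t) (measurable_upper t'). Qed.

Lemma upper_decr t t' : t <= t' -> upper t' `<=` upper t.
Proof. by move=> tt' g /=; apply: le_lt_trans. Qed.

(* Level sets and bands have positive measure: they contain nondegenerate
   intervals because l is continuous, increasing and unbounded above. *)
Lemma upper_measure_gt0 t : (0 < mu (upper t))%E.
Proof.
have [g tlg] := l_sup t.
have gg1 : g < g + 1 by rewrite ltrDl.
apply: (lt_le_trans (itv_measure_gt0 gg1)).
apply: le_measure; rewrite ?inE; [exact: measurable_itv | exact: measurable_upper |].
by move=> x /=; rewrite in_itv /= => /andP[gx _]; apply: (lt_le_trans tlg); rewrite l_le.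
Qed.

Lemma band_measure_gt0 t t' : 0 < t -> t < t' -> (0 < mu (band t t'))%E.
Proof.
move=> t0 tt'.
have [g1 lg1] : exists g, l g = (t + t') / 2 by apply: ratio_onto; lra.
have [g2 lg2] : exists g, l g = t' by apply: ratio_onto; lra.
have g12 : g1 < g2 by rewrite -(leW_mono l_le) lg1 lg2; lra.
apply: (lt_le_trans (itv_measure_gt0 g12)).
apply: le_measure; rewrite ?inE; [exact: measurable_itv | exact: measurable_band |].
move=> x /=; rewrite in_itv /= => /andP[g1x xg2]; split.
  by apply: (lt_le_trans _ (ltW_homo l_incr g1x)); rewrite lg1; lra.
by apply/negP; rewrite -leNgt -lg2 l_le.
Qed.

Definition upper_integral (f : R -> R) (t : R) : R := Rintegral mu (upper t) f.

Lemma upper_integral_split f t t' : mu.-integrable setT (EFin \o f) -> t <= t' ->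
  upper_integral f t - upper_integral f t' = Rintegral mu (band t t') f.
Proof.
move=> fint tt'.
have -> : upper_integral f t = Rintegral mu (upper t' `|` band t t') f.
  by rewrite /band setDUK //; exact: upper_decr.
rewrite Rintegral_setU; first by rewrite addrAC subrr add0r.
- exact: measurable_upper.
- exact: measurable_band.
- by apply: integrable_sub fint; apply: measurableU;
    [exact: measurable_upper | exact: measurable_band].
- by rewrite /disj_set /band setDIK.
Qed.

Lemma upper_integral_gt0 f t : (forall g, 0 < f g) ->
  mu.-integrable setT (EFin \o f) -> 0 < upper_integral f t.
Proof.
move=> fpos fint; apply: Rintegral_gt0 => //.
- exact: measurable_upper.
- exact: upper_measure_gt0.
- exact: integrable_sub (measurable_upper t) fint.
Qed.

Lemma band_integral_gt0 f t t' : (forall g, 0 < f g) ->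
  mu.-integrable setT (EFin \o f) -> 0 < t -> t < t' ->
  0 < upper_integral f t - upper_integral f t'.
Proof.
move=> fpos fint t0 tt'; rewrite upper_integral_split ?ltW //.
apply: Rintegral_gt0 => //.
- exact: measurable_band.
- exact: band_measure_gt0.
- exact: integrable_sub (measurable_band t t') fint.
Qed.

(* On the band a <= t' b, while above level t' one has a > t' b. *)
Lemma band_ratio_le t t' : t <= t' ->
  upper_integral a t - upper_integral a t' <=
  t' * (upper_integral b t - upper_integral b t').
Proof.
move=> tt'; rewrite !upper_integral_split // -RintegralZl; last 2 first.
- exact: measurable_band.
- exact: integrable_sub (measurable_band t t') b_int.
apply: le_Rintegral.
- exact: measurable_band.
- exact: integrable_sub (measurable_band t t') a_int.
- exact: integrable_sub (measurable_band t t') (integrable_scale t' measurableT b_int).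
move=> g [_ /negP]; rewrite -leNgt l_ratio => lg.
by rewrite -ler_pdivrMr.
Qed.

Lemma upper_ratio_lt t : t * upper_integral b t < upper_integral a t.
Proof.
have mU := measurable_upper t.
have aU := integrable_sub mU a_int; have bU := integrable_sub mU b_int.
rewrite -subr_gt0 /upper_integral -RintegralZl // -RintegralB //; last first.
  exact: integrable_scale.
apply: Rintegral_gt0 => //; first exact: upper_measure_gt0.
  apply: integrable_sub mU _.
  apply: (eq_integrable measurableT _ _ _ (integrable_lincomb 1 (- t) measurableT a_int b_int)).
  by move=> g _ /=; rewrite mul1r mulNr.
by move=> g; rewrite /upper /= l_ratio subr_gt0 -ltr_pdivlMr.
Qed.

Definition mixture_mass (pi t : R) : R :=
  pi * upper_integral a t + (1 - pi) * upper_integral b t.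

Lemma mixture_mass_decr pi t t' : 0 < pi < 1 -> 0 < t -> t < t' ->
  mixture_mass pi t' < mixture_mass pi t.
Proof.
move=> /andP[pi0 pi1] t0 tt'; rewrite /mixture_mass.
have := band_integral_gt0 a_gt0 a_int t0 tt'.
have := band_integral_gt0 b_gt0 b_int t0 tt'.
nra.
Qed.

Lemma share_incr pi t t' : 0 < pi < 1 -> 0 < t -> t < t' ->
  pi * upper_integral a t / mixture_mass pi t <
  pi * upper_integral a t' / mixture_mass pi t'.
Proof.
move=> pi01 t0 tt'; apply: (share_lt (t := t')) => //.
- exact: band_integral_gt0.
- exact: band_integral_gt0.
- exact: upper_integral_gt0.
- exact: upper_integral_gt0.
- exact/band_ratio_le/ltW.
- exact: upper_ratio_lt.
Qed.

End UpperLevelSets.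

Lemma thr_incr (R : realType) (pi xq xu tau tau' : R) : 0 < pi < 1 ->
  - xu < tau -> tau < tau' -> tau' < xq ->
  0 < thr pi xq xu tau < thr pi xq xu tau'.
Proof.
move=> /andP[pi0 pi1] xu_tau tau_tau' tau'_xq; rewrite /thr; apply/andP; split.
  by apply: divr_gt0; apply: mulr_gt0; lra.
rewrite ltr_pdivrMr; last by apply: mulr_gt0; lra.
rewrite mulrAC ltr_pdivlMr; last by apply: mulr_gt0; lra.
rewrite -subr_gt0.
have -> : (1 - pi) * (xu + tau') * (pi * (xq - tau)) -
          (1 - pi) * (xu + tau) * (pi * (xq - tau')) =
          ((1 - pi) * pi) * ((xq + xu) * (tau' - tau)) by ring.
by apply: mulr_gt0; apply: mulr_gt0; lra.
Qed.

Lemma continuous_section (T U V : topologicalType) (F : T -> U -> V) (x : T) :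
  continuous (fun z : T * U => F z.1 z.2) -> continuous (F x).
Proof.
move=> Fcont y; have -> : F x = (fun z : T * U => F z.1 z.2) \o pair x by [].
apply: continuous_comp; last exact: Fcont.
exact: (cvg_pair (cvg_cst x) cvg_id).
Qed.

Section ScoreRepresentation.
Variable R : realType.
Variables (hq hu : R -> R -> R) (pi xq xu th : R).
Hypothesis hq_int : (@lebesgue_measure R).-integrable setT (EFin \o hq th).
Hypothesis hu_int : (@lebesgue_measure R).-integrable setT (EFin \o hu th).
Hypothesis l_cont : continuous (lr hq hu th).

Local Notation l := (lr hq hu th).
Local Notation level tau := (thr pi xq xu tau).

(* The event {A(tau) = 1} is the upper level set of l at level thr tau. *)
Let gint_accepted (f : R -> R) tau :
  (@lebesgue_measure R).-integrable setT (EFin \o f) ->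
  gint (fun g => f g * Aind hq hu pi xq xu tau th g) =
  Rintegral (@lebesgue_measure R) (upper l (level tau)) f.
Proof.
by move=> fint; apply: Rintegral_indicator => //; exact: measurable_upper.
Qed.

Lemma s1_upper tau :
  s1 hq hu pi xq xu th tau =
  pi * upper_integral l (hq th) (level tau) /
  mixture_mass (hq th) (hu th) l pi (level tau).
Proof.
have mU := measurable_upper l_cont (level tau).
rewrite /s1 gint_accepted ?integrable_scale // gint_accepted; last first.
  exact: integrable_lincomb.
rewrite /mixture_mass /upper_integral RintegralZl ?Rintegral_lincomb //;
  exact: integrable_sub.
Qed.

Lemma s2_upper tau :
  s2 hq hu pi xq xu th tau =
  mixture_mass (hq th) (hu th) l pi (level tau) /
  (pi * gint (hq th) + (1 - pi) * gint (hu th)).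
Proof.
have mU := measurable_upper l_cont (level tau).
rewrite /s2 gint_accepted; last exact: integrable_lincomb.
rewrite /gint /mixture_mass /upper_integral !Rintegral_lincomb //;
  exact: integrable_sub.
Qed.

End ScoreRepresentation.

Section ScoreMonotonicity.
Variable R : realType.
Variables (hq hu : R -> R -> R) (pi xq xu th : R).
Hypothesis pi01 : 0 < pi < 1.
Hypothesis hq_gt0 : forall g, 0 < hq th g.
Hypothesis hu_gt0 : forall g, 0 < hu th g.
Hypothesis hq_int : (@lebesgue_measure R).-integrable setT (EFin \o hq th).
Hypothesis hu_int : (@lebesgue_measure R).-integrable setT (EFin \o hu th).
Hypothesis l_cont : continuous (lr hq hu th).
Hypothesis l_incr : {homo lr hq hu th : x y / x < y}.
Hypothesis l_inf : forall e, 0 < e -> exists g, lr hq hu th g < e.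
Hypothesis l_sup : forall M, exists g, M < lr hq hu th g.

Lemma s1_incr tau tau' : - xu < tau -> tau < tau' -> tau' < xq ->
  s1 hq hu pi xq xu th tau < s1 hq hu pi xq xu th tau'.
Proof.
move=> xu_tau tau_tau' tau'_xq; have /andP[t0 tt'] := thr_incr pi01 xu_tau tau_tau' tau'_xq.
by rewrite !s1_upper //; apply: share_incr.
Qed.

Lemma total_mass_gt0 : 0 < pi * gint (hq th) + (1 - pi) * gint (hu th).
Proof.
have muT : (0 < (@lebesgue_measure R) setT)%E.
  apply: (lt_le_trans (itv_measure_gt0 (@ltr01 R))).
  by apply: le_measure; rewrite ?inE //; exact: measurable_itv.
have q0 : 0 < gint (hq th) by apply: Rintegral_gt0.
have u0 : 0 < gint (hu th) by apply: Rintegral_gt0.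
by move: pi01 => /andP[pi0 pi1]; nra.
Qed.

Lemma s2_decr tau tau' : - xu < tau -> tau < tau' -> tau' < xq ->
  s2 hq hu pi xq xu th tau' < s2 hq hu pi xq xu th tau.
Proof.
move=> xu_tau tau_tau' tau'_xq; have /andP[t0 tt'] := thr_incr pi01 xu_tau tau_tau' tau'_xq.
rewrite !s2_upper // ltr_pM2r ?invr_gt0 ?total_mass_gt0 //.
exact: mixture_mass_decr.
Qed.

End ScoreMonotonicity.

Lemma Nv_gt_iff (R : realType) (xq xu c s : R) : 0 < xq -> 0 < xu ->
  (c < Nv xq xu s) = (beta xq xu c < s).
Proof.
move=> xq0 xu0; rewrite /Nv /beta ltr_pdivrMr; last by lra.
by apply/idP/idP => ?; lra.
Qed.

(* For two scores on the same side of beta the hiring decision is the same,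
   so the regret difference is the difference of N, which is increasing. *)
Lemma regret_lt_iff (R : realType) (xq xu c : R) (Q : bool) (s s' : R) :
  0 < xq -> 0 < xu ->
  (beta xq xu c < s /\ beta xq xu c < s') \/ (s < beta xq xu c /\ s' < beta xq xu c) ->
  (s' < s <-> regret xq xu c Q s' < regret xq xu c Q s).
Proof.
move=> xq0 xu0 same_side.
have same_decision : Aprime xq xu c s = Aprime xq xu c s'.
  rewrite /Aprime !Nv_gt_iff //.
  by case: same_side => -[bs bs']; rewrite ?bs ?bs' // !ltNge ?(ltW bs) ?(ltW bs').
rewrite /regret /Pv same_decision /Nv.
by split => ?; nra.
Qed.

Theorem mainTheorem13 (R : realType) (hq hu : R -> R -> R) (pi xq xu c : R)
  (* Q ~ Bernoulli(pi) with pi in (0,1) *)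
  (Hpi : 0 < pi < 1)
  (* h_q, h_u: strictly positive joint densities on R^2 *)
  (Hhq_pos : forall th g, 0 < hq th g)
  (Hhu_pos : forall th g, 0 < hu th g)
  (Hhq_meas : measurable_fun setT (fun z : R * R => hq z.1 z.2))
  (Hhu_meas : measurable_fun setT (fun z : R * R => hu z.1 z.2))
  (Hhq_dens : (\int[(@lebesgue_measure R) \x (@lebesgue_measure R)]_z
                 (hq z.1 z.2)%:E = 1)%E)
  (Hhu_dens : (\int[(@lebesgue_measure R) \x (@lebesgue_measure R)]_z
                 (hu z.1 z.2)%:E = 1)%E)
  (* the conditional densities given Theta = th are well defined *)
  (Hhq_sec : forall th, (@lebesgue_measure R).-integrable setT
                          (fun g => (hq th g)%:E))
  (Hhu_sec : forall th, (@lebesgue_measure R).-integrable setT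
                          (fun g => (hu th g)%:E))
  (* monotone likelihood ratio assumption on l = h_q / h_u *)
  (Hl_cont : continuous (fun z : R * R => lr hq hu z.1 z.2))
  (Hl_inc_th : forall g, {homo (fun th => lr hq hu th g) : a b / a < b})
  (Hl_inc_g : forall th, {homo (fun g => lr hq hu th g) : a b / a < b})
  (Hl_inf : forall th e, 0 < e -> exists g, lr hq hu th g < e)
  (Hl_sup : forall th M, exists g, M < lr hq hu th g)
  (* payoffs and cutoff *)
  (Hxq : 0 < xq) (Hxu : 0 < xu) (Hc : - xu < c < xq)
  (th : R) (Hphi : phi hq hu pi th < beta xq xu c)
  (Q : bool)
  (* tau1 = tau_1^d(th), tau2 = tau_2^d(th): the critical prejudices *)
  (tau1 tau2 : R)
  (Htau1 : - xu < tau1 < xq) (Hs1 : s1 hq hu pi xq xu th tau1 = beta xq xu c)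
  (Htau2 : - xu < tau2 < xq) (Hs2 : s2 hq hu pi xq xu th tau2 = beta xq xu c)
  (Hneq : tau1 != tau2)
  (tau : R) (Htau : Num.min tau1 tau2 < tau < Num.max tau1 tau2) :
  s2 hq hu pi xq xu th tau < s1 hq hu pi xq xu th tau <->
  regret xq xu c Q (s2 hq hu pi xq xu th tau) <
  regret xq xu c Q (s1 hq hu pi xq xu th tau).
Proof.
have l_cont := continuous_section (x := th) Hl_cont.
have s1_mono := s1_incr Hpi (Hhq_pos th) (Hhu_pos th) (Hhq_sec th) (Hhu_sec th)
  l_cont (Hl_inc_g th) (Hl_inf th) (Hl_sup th).
have s2_mono := s2_decr Hpi (Hhq_pos th) (Hhu_pos th) (Hhq_sec th) (Hhu_sec th)
  l_cont (Hl_inc_g th) (Hl_inf th) (Hl_sup th).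
move: Htau1 Htau2 => /andP[xu_tau1 tau1_xq] /andP[xu_tau2 tau2_xq].
apply: regret_lt_iff => //.
case: (ltgtP tau1 tau2) Htau => [tau12|tau21|tau12]; last by rewrite tau12 eqxx in Hneq.
- (* tau1 < tau < tau2: both scores lie above beta *)
  move=> /andP[tau1_tau tau_tau2]; left.
  by split; [rewrite -Hs1; apply: s1_mono | rewrite -Hs2; apply: s2_mono] => //; lra.
- (* tau2 < tau < tau1: both scores lie below beta *)
  move=> /andP[tau2_tau tau_tau1]; right.
  by split; [rewrite -Hs1; apply: s1_mono | rewrite -Hs2; apply: s2_mono] => //; lra.
Qed.
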